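(* Fix $1<p<\infty$ and an integer $r>1$; let $s=r^{1/p}$, $M=\lfloor\log_2 r\rfloor$ and let $\alpha>0$ satisfy $\alpha^M=s$. Let $(x_n)\subseteq\mathcal N_\alpha$ be a block sequence with $\alpha^{-2}\le\|x_n\|_p\le\alpha^{-1}$ for all $n\in\mathbb N$. Then there is a block sequence $(y_n)\subseteq\mathcal N_\alpha$ of $(x_n)$ (i.e. $y_n=\sum_{i\in F_n}c_ix_i$ for finite sets $F_1<F_2<\dots$ of indices and real scalars $c_i$) such that $\alpha^{-3}\le\|J_my_n\|_p\le 1$ for all $n,m\in\mathbb N$.
   Context: $c_{00}$ = finitely supported real sequences; a block sequence $(x_n)$ means $\max{\rm supp}\,x_n<\min{\rm supp}\,x_{n+1}$. For $\beta>0$ let $C_\beta=\{\pm\beta^j: j\in\mathbb Z\}\cup\{0\}$ and $\mathcal N_\beta=\{x\in c_{00}: x(i)\in C_\beta\ \forall i\}$. For $x\in\mathcal N_\alpha$ and $m\in\mathbb N$, $J_{m,x}=\{i\in{\rm supp}\,x: \alpha^{-m}x(i)\in C_s\}$ and $J_mx$ is the restriction of $x$ to $J_{m,x}$. *)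

From HB Require Import structures.
From mathcomp Require Import all_boot all_order all_algebra.
From mathcomp Require Import all_classical all_reals all_analysis.
Set Implicit Arguments. Unset Strict Implicit. Unset Printing Implicit Defensive.
Import Order.TTheory GRing.Theory Num.Theory.
Local Open Scope ring_scope.

Record c00 (R : realType) := C00 {
  c00_fun :> nat -> R;
  c00_bnd : nat;
  c00_bndP : forall i, (c00_bnd <= i)%N -> c00_fun i = 0 }.

(* the l_p norm (the sum is over indices below the bound, i.e. over a
   set containing the support; independent of the chosen bound) *)
Definition lpnorm (R : realType) (p : R) (x : c00 R) : R :=
  (\sum_(i < c00_bnd x) `|x i| `^ p) `^ p^-1.

Definition block (R : realType) (x : nat -> c00 R) : Prop :=
  forall n m i j, (n < m)%N -> x n i != 0 -> x m j != 0 -> (i < j)%N.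

Definition Cset (R : realType) (beta : R) (t : R) : Prop :=
  t = 0 \/ exists j : int, t = beta ^ j \/ t = - beta ^ j.

Definition Nset (R : realType) (beta : R) (x : c00 R) : Prop :=
  forall i, Cset beta (x i).

Definition Jfun (R : realType) (alpha s : R) (m : nat) (x : c00 R) : nat -> R :=
  fun i => if `[< (x i != 0) /\ Cset s (alpha ^- m * x i) >] then x i else 0.

Lemma Jfun_bnd (R : realType) (alpha s : R) (m : nat) (x : c00 R) :
  forall i, (c00_bnd x <= i)%N -> Jfun alpha s m x i = 0.
Proof. by move=> i hi; rewrite /Jfun c00_bndP //; case: ifP. Qed.

Definition J (R : realType) (alpha s : R) (m : nat) (x : c00 R) : c00 R :=
  @C00 R (Jfun alpha s m x) (c00_bnd x) (@Jfun_bnd R alpha s m x).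

(* For v in N_alpha put mu_i(v) = ||J_i v||_p^p and beta = alpha^p, so that
   beta >= 2 because alpha^(p M) = r >= 2^M.  Since s = alpha^M, a coordinate
   +-alpha^f of v survives in J_i v exactly when i = f (mod M).  Hence mu_i(v)
   is M-periodic in i, any M consecutive values mu_i(v) add up to ||v||_p^p,
   and scaling shifts the index: mu_i(alpha^-e v) = beta^-e mu_(i+e)(v).
   By pigeonhole we pass to a subsequence of (x_n) on which, for each i < M,
   all the mu_i(x_n) lie in one bin of width beta^-2 / (4M).  Each y_n is the
   sum over t < M of about (beta/3) beta^(t+M) distinct vectors of the
   subsequence, all scaled by alpha^-(t+M).  The t-th group then contributes
   between (beta/3) and (2 beta/3) times mu_(m+t) of any vector of the
   subsequence, up to the bin width; summing over t, mu_m(y_n) lies between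
   (beta/3) (||x||_p^p - beta^-2/4) and (2 beta/3) (||x||_p^p + beta^-2/4),
   hence in [beta^-3, 1] for every m. *)

From HB Require Import structures.
From mathcomp Require Import all_boot all_order all_algebra.
From mathcomp Require Import all_classical all_reals all_analysis.
From mathcomp Require Import zify ring lra.
Import Order.TTheory GRing.Theory Num.Theory.
Set Implicit Arguments. Unset Strict Implicit. Unset Printing Implicit Defensive.
Local Open Scope ring_scope.

Section DisjointSums.
Variables (I : eqType) (V : nmodType).
Implicit Types (F : seq I) (a : I -> V).

Lemma big_disjoint_map (W : nmodType) (f : V -> W) F a : f 0 = 0 -> uniq F ->
  {in F &, forall i j, a i != 0 -> a j != 0 -> i = j} ->
  f (\sum_(i <- F) a i) = \sum_(i <- F) f (a i).
Proof.
move=> f0; elim: F => [|i F IH] /=; first by rewrite !big_nil.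
move=> /andP[iF uF] dis; rewrite !big_cons.
have disF := sub_in2 (@mem_behead _ (i :: F)) dis.
have [->|ai] := eqVneq (a i) 0; first by rewrite !add0r f0 add0r IH.
have aF j : j \in F -> a j = 0.
  move=> jF; have [//|aj] := eqVneq (a j) 0.
  have ij : i = j by apply: dis; rewrite ?inE ?eqxx ?jF ?orbT.
  by move: iF; rewrite ij jF.
have -> : \sum_(j <- F) a j = 0 by apply: big1_seq => j /andP[_ /aF].
have -> : \sum_(j <- F) f (a j) = 0 by apply: big1_seq => j /andP[_ /aF ->].
by rewrite !addr0.
Qed.

Lemma big_disjoint_term F a : uniq F ->
  {in F &, forall i j, a i != 0 -> a j != 0 -> i = j} ->
  \sum_(i <- F) a i = 0 \/ exists2 i, i \in F & \sum_(j <- F) a j = a i.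
Proof.
elim: F => [|i F IH] /=; first by left; rewrite big_nil.
move=> /andP[iF uF] dis; rewrite !big_cons.
have [->|ai] := eqVneq (a i) 0.
  rewrite add0r; case: (IH uF (sub_in2 (@mem_behead _ (i :: F)) dis)) => [|[j jF]].
    by left.
  by right; exists j; rewrite ?inE ?jF ?orbT.
right; exists i; rewrite ?mem_head //.
suff -> : \sum_(j <- F) a j = 0 by rewrite addr0.
apply: big1_seq => j /andP[_ jF]; have [//|aj] := eqVneq (a j) 0.
have ij : i = j by apply: dis; rewrite ?inE ?eqxx ?jF ?orbT.
by move: iF; rewrite ij jF.
Qed.

End DisjointSums.

Section Cset.
Variable R : realType.
Implicit Types (a t : R).

Lemma CsetN a t : Cset a (- t) <-> Cset a t.
Proof.
suff imp u : Cset a u -> Cset a (- u) by split=> /imp; rewrite ?opprK.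
case=> [->|[j [->|->]]]; first by left; rewrite oppr0.
- by right; exists j; right.
- by right; exists j; left; rewrite opprK.
Qed.

Lemma Cset_norm a t : Cset a `|t| <-> Cset a t.
Proof. by case: ler0P; rewrite ?CsetN. Qed.

Lemma CsetZ a t (z : int) : a != 0 -> Cset a (a ^ z * t) <-> Cset a t.
Proof.
move=> a0; suff imp u w : Cset a u -> Cset a (a ^ w * u).
  split=> [/(imp _ (- z))|/imp //].
  by rewrite mulrA -expfzDr // addNr expr0z mul1r.
case=> [->|[j [->|->]]]; first by left; rewrite mulr0.
- by right; exists (w + j); left; rewrite expfzDr.
- by right; exists (w + j); right; rewrite mulrN expfzDr.
Qed.

Lemma Cset_expz a (M : nat) (f : int) :
  1 < a -> Cset (a ^+ M) (a ^ f) <-> (M%:Z %| f)%Z.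
Proof.
move=> a1; have a0 : 0 < a by apply: lt_trans a1.
have powM j : (a ^+ M) ^ j = a ^ (j * M%:Z) by rewrite mulrC -exprz_exp.
split=> [|/dvdzP[j ->]]; last by right; exists j; left; rewrite powM.
case=> [/eqP|[j [|]]]; first by rewrite gt_eqF // exprz_gt0.
- by rewrite powM => /(ieexprIz a0 (negbT (gt_eqF a1))) ->; apply/dvdzP; exists j.
- move=> af; have := exprz_gt0 f a0; rewrite af powM oppr_gt0.
  by rewrite ltNge exprz_ge0 // ltW.
Qed.

End Cset.

Section Jval.
Variable R : realType.
Implicit Types (alpha s p t : R).

Definition Jval alpha s (m : nat) t : R :=
  if `[< t != 0 /\ Cset s (alpha ^- m * t) >] then t else 0.

Lemma Jval0 alpha s m : Jval alpha s m 0 = 0.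
Proof. by rewrite /Jval; case: ifP. Qed.

Lemma JvalZ alpha s m n t : alpha != 0 ->
  Jval alpha s m (alpha ^- n * t) = alpha ^- n * Jval alpha s (m + n) t.
Proof.
move=> a0; rewrite /Jval mulrA -invfM -exprD mulf_eq0 invr_eq0 expf_eq0.
by rewrite (negbTE a0) andbF /=; case: ifP; rewrite ?mulr0.
Qed.

Lemma Jval_period alpha M m q t : alpha != 0 ->
  Jval alpha (alpha ^+ M) (m + M * q) t = Jval alpha (alpha ^+ M) m t.
Proof.
move=> a0; have aM0 : alpha ^+ M != 0 by rewrite expf_eq0 (negbTE a0) andbF.
rewrite /Jval exprD exprM invfM [_ * _^-1]mulrC -mulrA exprnN.
by congr (if _ then _ else _); apply: asbool_equiv_eq; rewrite CsetZ.
Qed.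

Lemma Jval_expz alpha M m (f : int) t : 1 < alpha -> `|t| = alpha ^ f ->
  Jval alpha (alpha ^+ M) m t = if (M%:Z %| f - m%:Z)%Z then t else 0.
Proof.
move=> a1 tf; have a0 : 0 < alpha by apply: lt_trans a1.
have t0 : t != 0 by rewrite -normr_eq0 tf gt_eqF // exprz_gt0.
have E : Cset (alpha ^+ M) (alpha ^- m * t) <-> (M%:Z %| f - m%:Z)%Z.
  apply: iff_trans (iff_sym (Cset_norm _ _)) _.
  rewrite normrM tf ger0_norm ?invr_ge0 ?exprn_ge0 ?ltW // exprnN.
  by rewrite -expfzDr ?gt_eqF // addrC; apply: Cset_expz.
rewrite /Jval; case: asboolP => [[_ /E ->] //|nC].
by case: ifP => // /E C; case: nC.
Qed.

Lemma sum_powR_Jval_window alpha p M m t :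
  1 < alpha -> (0 < M)%N -> p != 0 -> Cset alpha t ->
  \sum_(i < M) `|Jval alpha (alpha ^+ M) (m + i) t| `^ p = `|t| `^ p.
Proof.
move=> a1 M0 p0 Ct; have [->|t0] := eqVneq t 0.
  by rewrite normr0 powR0 // big1 // => i _; rewrite Jval0 normr0 powR0.
have [f tf] : exists f, `|t| = alpha ^ f.
  case: Ct => [/eqP|[f [->|->]]]; [by rewrite (negbTE t0) | |];
    by exists f; rewrite ?normrN gtr0_norm // exprz_gt0 // (lt_trans ltr01 a1).
pose r : int := modz (f - m%:Z) M%:Z.
have i0M : (absz r < M)%N.
  by rewrite -ltz_nat gez0_abs ?modz_ge0 ?ltz_pmod // -?lt0n.
have dvdE (i : 'I_M) : (M%:Z %| f - (m + i)%N%:Z)%Z = (i == Ordinal i0M).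
  rewrite -val_eqE /= -eqz_nat gez0_abs ?modz_ge0 -?lt0n // eq_sym.
  rewrite -(modz_small (m := i) (d := M)) ?ltz_nat ?ltn_ord // eqz_mod_dvd.
  by rewrite PoszD opprD addrA.
rewrite (bigD1 (Ordinal i0M)) // big1 => [|i /negbTE iN].
  by rewrite (Jval_expz _ _ a1 tf) dvdE eqxx /= addr0.
by rewrite (Jval_expz _ _ a1 tf) dvdE iN normr0 powR0.
Qed.

End Jval.

Section LpSum.
Variable R : realType.
Implicit Types (a b p z : R) (v : c00 R).

Lemma powR_exprn a p (n : nat) : 0 <= a -> (a ^+ n) `^ p = (a `^ p) ^+ n.
Proof.
move=> a0; rewrite -powR_mulrn // -powRrM mulrC powRrM powR_mulrn //.
exact: powR_ge0.
Qed.

Lemma powR_exprnV a p (n : nat) : 0 <= a -> (a ^- n) `^ p = (a `^ p) ^- n.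
Proof.
move=> a0; rewrite -powR_inv1 ?exprn_ge0 // -powRrM mulrC powRrM powR_inv1.
  by rewrite powR_exprn.
exact: powR_ge0.
Qed.

Lemma ler_powR2r p : 0 < p -> {in Num.nneg &, {mono (@powR R) ^~ p : x y / x <= y}}.
Proof. by move=> p0; apply: le_mono_in; apply: gt0_ltr_powR. Qed.

Definition lpsum p v : R := \sum_(k < c00_bnd v) `|v k| `^ p.

Lemma lpsum_ge0 p v : 0 <= lpsum p v.
Proof. by apply: sumr_ge0 => k _; apply: powR_ge0. Qed.

Lemma lpsum_widen p v (B : nat) : p != 0 -> (c00_bnd v <= B)%N ->
  \sum_(k < B) `|v k| `^ p = lpsum p v.
Proof.
move=> p0 vB; rewrite /lpsum (big_ord_widen B (fun k => `|v k| `^ p) vB).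
rewrite [RHS]big_mkcond /=.
by apply: eq_bigr => k _; case: ltnP => // /c00_bndP ->; rewrite normr0 powR0.
Qed.

Lemma lpnorm_itv p a b v : 0 < p -> 0 <= a -> 0 <= b ->
  (a <= lpnorm p v <= b) = (a `^ p <= lpsum p v <= b `^ p).
Proof.
move=> p0 a0 b0; have -> : lpsum p v = lpnorm p v `^ p.
  by rewrite /lpnorm -powRrM mulVf ?gt_eqF // powRr1 // lpsum_ge0.
by rewrite !ler_powR2r // nnegrE powR_ge0.
Qed.

End LpSum.

Section JSums.
Variable R : realType.
Implicit Types (alpha p s : R) (v : c00 R).

Lemma JE alpha s m v k : J alpha s m v k = Jval alpha s m (v k).
Proof. by []. Qed.

Lemma lpsum_J_window p alpha M m v :
  1 < alpha -> (0 < M)%N -> p != 0 -> Nset alpha v ->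
  \sum_(i < M) lpsum p (J alpha (alpha ^+ M) (m + i) v) = lpsum p v.
Proof.
move=> a1 M0 p0 Nv; rewrite /lpsum /= exchange_big; apply: eq_bigr => k _ /=.
exact: sum_powR_Jval_window.
Qed.

Lemma lpsum_J_mod p alpha M i v : alpha != 0 ->
  lpsum p (J alpha (alpha ^+ M) i v) = lpsum p (J alpha (alpha ^+ M) (i %% M) v).
Proof.
move=> a0; rewrite {1}(divn_eq i M) addnC mulnC /lpsum.
by apply: eq_bigr => k _; rewrite !JE Jval_period.
Qed.

Lemma lpsum_J_le p alpha (M i : nat) v :
  1 < alpha -> p != 0 -> Nset alpha v -> (i < M)%N ->
  lpsum p (J alpha (alpha ^+ M) i v) <= lpsum p v.
Proof.
move=> a1 p0 Nv iM; have M0 : (0 < M)%N by apply: leq_ltn_trans iM.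
rewrite -(lpsum_J_window 0 a1 M0 p0 Nv) (bigD1 (Ordinal iM)) //= lerDl.
by apply: sumr_ge0 => j _; apply: lpsum_ge0.
Qed.

End JSums.

Section Combinations.
Variable R : realType.
Implicit Types (alpha p s : R) (x : nat -> c00 R) (c : nat -> R) (F : seq nat).

Lemma comb_bndP x c F k : (\max_(i <- F) c00_bnd (x i) <= k)%N ->
  \sum_(i <- F) c i * x i k = 0.
Proof.
move=> Fk; rewrite big1_seq // => i /andP[_ iF].
by rewrite c00_bndP ?mulr0 //; apply: leq_trans Fk; apply: leq_bigmax_seq.
Qed.

Definition comb x c F : c00 R :=
  @C00 R (fun k => \sum_(i <- F) c i * x i k) _ (@comb_bndP x c F).

Lemma combE x c F k : comb x c F k = \sum_(i <- F) c i * x i k.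
Proof. by []. Qed.

Section DisjointSupports.
Variable x : nat -> c00 R.
Hypothesis x_disj : forall a b k, x a k != 0 -> x b k != 0 -> a = b.

Lemma comb_terms_disjoint c F k :
  {in F &, forall i j, c i * x i k != 0 -> c j * x j k != 0 -> i = j}.
Proof.
move=> i j _ _; rewrite !mulf_eq0 !negb_or => /andP[_ xi] /andP[_ xj].
exact: x_disj xi xj.
Qed.

Lemma comb_term c F k : uniq F ->
  comb x c F k = 0 \/ exists2 i, i \in F & comb x c F k = c i * x i k.
Proof. by move=> uF; apply: big_disjoint_term => //; apply: comb_terms_disjoint. Qed.

Lemma Nset_comb alpha (e : nat -> nat) F : alpha != 0 -> uniq F ->
  (forall n, Nset alpha (x n)) -> Nset alpha (comb x (fun i => alpha ^- e i) F).
Proof.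
move=> a0 uF Nx k; case: (@comb_term (fun i => alpha ^- e i) F k uF) => [->|[i _ ->]].
  by left.
by rewrite exprnN; apply/CsetZ => //; apply: Nx.
Qed.

Lemma lpsum_J_comb p alpha s m (e : nat -> nat) F :
  0 < alpha -> p != 0 -> uniq F ->
  lpsum p (J alpha s m (comb x (fun i => alpha ^- e i) F)) =
  \sum_(i <- F) (alpha `^ p) ^- e i * lpsum p (J alpha s (m + e i) (x i)).
Proof.
move=> a0 p0 uF; have f0 : `|Jval alpha s m 0| `^ p = 0.
  by rewrite Jval0 normr0 powR0.
rewrite {1}/lpsum.
under eq_bigr => k _ do rewrite JE combE
  (big_disjoint_map (f := fun t => `|Jval alpha s m t| `^ p) f0 uF
     (comb_terms_disjoint (c := fun i => alpha ^- e i) (k := k))).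
rewrite exchange_big big_seq [RHS]big_seq; apply: eq_bigr => i iF.
have iB : (c00_bnd (x i) <= \max_(j <- F) c00_bnd (x j))%N.
  exact: (@leq_bigmax_seq _ F xpredT (fun j => c00_bnd (x j)) i iF isT).
rewrite -(lpsum_widen (v := J alpha s (m + e i) (x i)) p0 iB).
rewrite mulr_sumr; apply: eq_bigr => k _.
rewrite JE /= JvalZ ?gt_eqF // normrM powRM ?normr_ge0 // ger0_norm.
  by rewrite powR_exprnV // ltW.
by rewrite invr_ge0 exprn_ge0 // ltW.
Qed.

End DisjointSupports.

Lemma block_disjoint x : block x -> forall a b k, x a k != 0 -> x b k != 0 -> a = b.
Proof.
move=> bx a b k xa xb; case: (ltngtP a b) => // ab.
- by have := bx _ _ _ _ ab xa xb; rewrite ltnn.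
- by have := bx _ _ _ _ ab xb xa; rewrite ltnn.
Qed.

Lemma block_comb x c (F : nat -> seq nat) : block x -> (forall n, uniq (F n)) ->
  (forall n m i j, (n < m)%N -> i \in F n -> j \in F m -> (i < j)%N) ->
  block (fun n => comb x c (F n)).
Proof.
move=> bx uF Flt n m i j nm; have xdis := block_disjoint bx.
case: (comb_term xdis c i (uF n)) => [->|[a aF ->]]; first by rewrite eqxx.
case: (comb_term xdis c j (uF m)) => [->|[b bF ->]]; first by rewrite eqxx.
rewrite !mulf_eq0 !negb_or => /andP[_ xa] /andP[_ xb].
exact: bx (Flt _ _ _ _ nm aF bF) xa xb.
Qed.

End Combinations.

Lemma cst_subsequence (T : finType) (u : nat -> T) :
  exists a, exists2 f : nat -> nat, {homo f : m n / (m < n)%N} & forall n, u (f n) = a.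
Proof.
have [a [A Aoo Au]] := finite_range_cst_subsequence (u_ := u) finite_finset.
have [|f [fi _ Af]] := infinite_increasing_seq_wf _ Aoo 0%N.
  by move=> n; apply: sub_finite_set (finite_II n.+1) => m /=.
by exists a, f => [m n|n]; [rewrite (leqW_mono fi) | apply/Au].
Qed.

Lemma approx_cst_subsequence (R : realType) (M : nat) (u : nat -> nat -> R) (d B : R) :
  0 < d -> (forall n i, (i < M)%N -> 0 <= u n i <= B) ->
  exists2 f : nat -> nat, {homo f : m n / (m < n)%N} &
    exists th : nat -> nat, forall n i, (i < M)%N ->
      (th i)%:R * d <= u (f n) i <= (th i)%:R * d + d.
Proof.
move=> d0 uB; pose G := Num.Def.trunc (B / d).
have bin n i : (i < M)%N -> (Num.Def.trunc (u n i / d) < G.+1)%N.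
  move=> iM; have /andP[_ ub] := uB n i iM.
  by rewrite ltnS le_truncn // ler_pM2r ?invr_gt0.
pose typ n : {ffun 'I_M -> 'I_G.+1} :=
  [ffun i : 'I_M => inord (Num.Def.trunc (u n i / d))].
have [a [f fi fa]] := cst_subsequence typ.
exists f => //; exists (fun i => Num.Def.trunc (u (f 0%N) i / d)) => n i iM.
have -> : Num.Def.trunc (u (f 0%N) i / d) = Num.Def.trunc (u (f n) i / d).
  have := congr1 (fun g : {ffun 'I_M -> 'I_G.+1} => val (g (Ordinal iM)))
    (etrans (fa 0%N) (esym (fa n))).
  by rewrite !ffunE /= !inordK ?bin.
have /andP[lo hi] := truncn_itv (divr_ge0 (proj1 (andP (uB (f n) i iM))) (ltW d0)).
rewrite ler_pdivlMr // in lo; rewrite ltr_pdivrMr // -natr1 mulrDl mul1r in hi.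
by rewrite lo ltW.
Qed.

Section Slots.
Variables (f : nat -> nat) (M : nat) (len : nat -> nat).
Hypothesis f_incr : {homo f : m n / (m < n)%N}.
Local Open Scope nat_scope.

Definition slot_width : nat := \max_(t < M) len t.
Local Notation W := slot_width.

(* Block n takes the positions n M W, ..., (n + 1) M W - 1 of f, cut into M
   windows of width W, of which the t-th keeps its first [len t] positions. *)
Definition slots (n : nat) : seq nat :=
  [seq f (n * (M * W) + u) | u <- iota 0 (M * W) & (u %% W < len (u %/ W))%N].

(* The window of the position of i in f; meaningless off the range of f. *)
Definition slot_group (i : nat) : nat := ('pinv_(fun=> 0%N) setT f i %% (M * W)) %/ W.

Let f_inj : injective f. Proof. exact: incn_inj (leq_mono f_incr). Qed.

Lemma slots_uniq n : uniq (slots n).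
Proof.
by rewrite map_inj_uniq ?filter_uniq ?iota_uniq // => u v /f_inj /addnI.
Qed.

Lemma slots_lt n n' i j : (n < n')%N -> i \in slots n -> j \in slots n' -> (i < j)%N.
Proof.
move=> nn' /mapP[u]; rewrite mem_filter mem_iota => /andP[_ /andP[_ uS]] ->.
move=> /mapP[v]; rewrite mem_filter mem_iota => /andP[_ _] ->.
by apply: f_incr; nia.
Qed.

Lemma big_slots (V : nmodType) n (G : nat -> nat -> V) :
  (\sum_(i <- slots n) G (slot_group i) i =
   \sum_(t < M) \sum_(j < len t) G t (f (n * (M * W) + (t * W + j))))%R.
Proof.
rewrite big_map big_filter big_mkcond.
rewrite (_ : iota 0 (M * W) = index_iota 0 (M * W)); last by rewrite /index_iota subn0.
rewrite big_nat_mul big_mkord; apply: eq_bigr => t _.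
rewrite -{1}[t * W]add0n big_addn mulSn addnK big_mkord.
rewrite (big_ord_widen W (fun j => G t (f (n * (M * W) + (t * W + j)))));
  last exact: (leq_bigmax (F := fun t : 'I_M => len t) t).
rewrite [RHS]big_mkcond; apply: eq_bigr => j _.
have W0 : (0 < W)%N by apply: leq_ltn_trans (ltn_ord j).
have tjS : (t * W + j < M * W)%N by have := ltn_ord t; have := ltn_ord j; nia.
rewrite addnC modnMDl divnMDl // modn_small // divn_small // addn0.
case: ifP => // _; congr (G _ _).
rewrite /slot_group pinvKV ?in_setT //; last by move=> a b _ _ /f_inj.
by rewrite modnMDl modn_small // divnMDl // divn_small ?addn0.
Qed.

End Slots.

Lemma weighted_block_sum_bounds (R : realFieldType) (M : nat) (len : nat -> nat)
    (w lo : nat -> R) (mu : nat -> nat -> R) (K d : R) :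
  0 <= d ->
  (forall t, (t < M)%N -> 0 <= w t /\ K <= (len t)%:R * w t <= 2 * K) ->
  (forall t, (t < M)%N -> 0 <= lo t) ->
  (forall t j, (t < M)%N -> (j < len t)%N -> lo t <= mu t j <= lo t + d) ->
  K * \sum_(t < M) lo t <= \sum_(t < M) \sum_(j < len t) w t * mu t j
    <= 2 * K * \sum_(t < M) (lo t + d).
Proof.
move=> d0 hw hlo hmu; rewrite !mulr_sumr; apply/andP; split; apply: ler_sum => t _;
  have [w0 /andP[Kl Ku]] := hw t (ltn_ord t); have lo0 := hlo t (ltn_ord t).
- apply: (@le_trans _ _ (\sum_(j < len t) w t * lo t)).
    by rewrite sumr_const card_ord -[_ *+ len t]mulr_natl mulrA ler_wpM2r.
  apply: ler_sum => j _; rewrite ler_wpM2l //.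
  by case/andP: (hmu t j (ltn_ord t) (ltn_ord j)).
- apply: (@le_trans _ _ (\sum_(j < len t) w t * (lo t + d))).
    apply: ler_sum => j _; rewrite ler_wpM2l //.
    by case/andP: (hmu t j (ltn_ord t) (ltn_ord j)).
  by rewrite sumr_const card_ord -[_ *+ len t]mulr_natl mulrA ler_wpM2r ?addr_ge0.
Qed.

Lemma trunc_weight (R : realType) (K b : R) : 0 < b -> 1 <= K * b ->
  K <= (Num.Def.trunc (K * b)).+1%:R * b^-1 <= 2 * K.
Proof.
move=> b0 Kb1; have /andP[lo hi] := truncn_itv (le_trans ler01 Kb1).
rewrite -(ler_pM2r b0) -mulrA mulVf ?gt_eqF // mulr1 (ltW hi) /=.
rewrite -(ler_pM2r b0) -mulrA mulVf ?gt_eqF // mulr1 -natr1.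
lra.
Qed.

Lemma final_estimate (R : realFieldType) (b T : R) :
  2 <= b -> (b ^+ 2)^-1 <= T <= b^-1 ->
  (b ^+ 3)^-1 <= b / 3 * (T - (b ^+ 2)^-1 / 4) /\
  2 * (b / 3) * (T + (b ^+ 2)^-1 / 4) <= 1.
Proof.
move=> b2 /andP[T1 T2]; have b0 : 0 < b by apply: lt_le_trans b2.
set u := b^-1 in T2; have bu : b * u = 1 by rewrite mulfV ?gt_eqF.
have u0 : 0 < u by rewrite invr_gt0.
rewrite -!exprVn -/u in T1 *; have uh : u <= 1 / 2 by nra.
split.
- have -> : b / 3 * (T - u ^+ 2 / 4) = (b * u) * (T / u - u / 4) / 3.
    by field; rewrite gt_eqF.
  rewrite bu mul1r; have : u <= T / u by rewrite ler_pdivlMr // -expr2.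
  rewrite !exprS expr0 mulr1; nra.
- have -> : 2 * (b / 3) * (T + u ^+ 2 / 4) = 2 / 3 * (b * T) + (b * u) * u / 6.
    by rewrite expr2; field.
  rewrite bu; have : b * T <= 1 by rewrite -bu ler_pM2l.
  nra.
Qed.

Lemma ge2_powR_trunc_log (R : realType) (p a : R) (r : nat) :
  0 < p -> (1 < r)%N -> 0 <= a -> a ^+ trunc_log 2 r = r%:R `^ p^-1 -> 2 <= a `^ p.
Proof.
move=> p0 r1 a0 aM; have M0 : (0 < trunc_log 2 r)%N by rewrite trunc_log_gt0.
rewrite -(ler_pXn2r M0) ?nnegrE ?powR_ge0 // -powR_exprn // aM -powRrM.
by rewrite mulVf ?gt_eqF // powRr1 // -natrX ler_nat trunc_logP // ltnW.
Qed.

Lemma gt1_powR (R : realType) (p a : R) : 0 < p -> 0 <= a -> 1 < a `^ p -> 1 < a.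
Proof.
move=> p0 a0; case: (ltrP 1 a) => // a_le1.
by have := ge0_ler_powR (ltW p0) (a0 : a \in Num.nneg) ler01 a_le1; rewrite powR1; lra.
Qed.

Section Construction.
Variables (R : realType) (p alpha : R) (M : nat) (x : nat -> c00 R).
Hypotheses (p0 : 0 < p) (a1 : 1 < alpha) (M0 : (0 < M)%N) (beta2 : 2 <= alpha `^ p).
Hypotheses (bx : block x) (Nx : forall n, Nset alpha (x n)).
Hypothesis x_lpsum :
  forall n, ((alpha `^ p) ^+ 2)^-1 <= lpsum p (x n) <= (alpha `^ p)^-1.

Local Notation beta := (alpha `^ p).
Local Notation mu v i := (lpsum p (J alpha (alpha ^+ M) i v)).

Definition bin_width : R := (beta ^+ 2)^-1 / 4 / M%:R.

(* By [trunc_weight], these copies of a vector scaled by beta^-(t+M) carry a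
   total weight between beta/3 and 2 beta/3. *)
Definition copies (t : nat) : nat := (Num.Def.trunc (beta / 3 * beta ^+ (t + M))).+1.

Lemma bin_width_gt0 : 0 < bin_width.
Proof.
have b0 : 0 < beta by apply: lt_le_trans beta2.
by rewrite !divr_gt0 ?invr_gt0 ?exprn_gt0 ?ltr0n.
Qed.

Variables (f th : nat -> nat).
Hypothesis f_incr : {homo f : m n / (m < n)%N}.
Hypothesis bins : forall n i, (i < M)%N ->
  (th i)%:R * bin_width <= mu (x (f n)) i <= (th i)%:R * bin_width + bin_width.

Definition block_coef (i : nat) : R := alpha ^- (slot_group f M copies i + M).

Let tau0 := lpsum p (x (f 0%N)).
Let lo m t := (th ((m + t) %% M))%:R * bin_width.

Lemma sum_bins_bounds m :
  tau0 - (beta ^+ 2)^-1 / 4 <= \sum_(t < M) lo m t /\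
  \sum_(t < M) (lo m t + bin_width) <= tau0 + (beta ^+ 2)^-1 / 4.
Proof.
have a0 : alpha != 0 by rewrite gt_eqF // (lt_trans ltr01 a1).
have Md : \sum_(t < M) bin_width = (beta ^+ 2)^-1 / 4.
  by rewrite sumr_const card_ord -[_ *+ M]mulr_natl mulrC divfK // pnatr_eq0 -lt0n.
have lo_mu (t : 'I_M) : lo m t <= mu (x (f 0%N)) (m + t) <= lo m t + bin_width.
  by rewrite lpsum_J_mod //; apply: bins; rewrite ltn_pmod.
rewrite /tau0 -(lpsum_J_window m a1 M0 (lt0r_neq0 p0) (Nx _)) -Md.
rewrite -sumrB -big_split /=.
by split; apply: ler_sum => t _; have /andP[] := lo_mu t; rewrite ?lerBlDr ?lerD2r.
Qed.

Lemma lpsum_J_block_comb n m : (beta ^+ 3)^-1 <=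
  lpsum p (J alpha (alpha ^+ M) m (comb x block_coef (slots f M copies n))) <= 1.
Proof.
have a0 : 0 < alpha by apply: lt_trans a1.
have b0 : 0 < beta by apply: lt_le_trans beta2.
have K0 : 0 <= beta / 3 by rewrite divr_ge0 ?ltW.
rewrite (lpsum_J_comb (block_disjoint bx) _ m (fun i => slot_group f M copies i + M))
  ?lt0r_neq0 ?slots_uniq //.
rewrite (big_slots M copies f_incr n
  (fun t i => beta ^- (t + M) * mu (x i) (m + (t + M)))).
have := @weighted_block_sum_bounds _ M copies (fun t => beta ^- (t + M)) (lo m)
  (fun t j => mu (x (f (n * (M * slot_width M copies) + (t * slot_width M copies + j))))
                 (m + (t + M))) (beta / 3) bin_width (ltW bin_width_gt0).
case/(_ _ _ _)/andP => [t tM|t tM|t j tM _|lb ub].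
- split; first by rewrite invr_ge0 exprn_ge0 // ltW.
  apply: trunc_weight.
    by rewrite exprn_gt0.
  have : beta <= beta ^+ (t + M).
    rewrite -{1}[beta]expr1 ler_weXn2l ?addn_gt0 ?M0 ?orbT //.
    by apply: le_trans beta2; rewrite ler1n.
  move: beta2; nra.
- by apply: mulr_ge0; [exact: ler0n | exact: ltW bin_width_gt0].
- by rewrite lpsum_J_mod ?gt_eqF // addnA modnDr; apply: bins; rewrite ltn_pmod.
have [lo_lb lo_ub] := sum_bins_bounds m.
have [e1 e2] := final_estimate beta2 (x_lpsum (f 0%N)).
apply/andP; split.
- exact: le_trans e1 (le_trans (ler_wpM2l K0 lo_lb) lb).
- exact: le_trans ub (le_trans (ler_wpM2l (mulr_ge0 (ler0n _ 2) K0) lo_ub) e2).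
Qed.

End Construction.

Theorem mainTheorem6 (R : realType) (p : R) (r : nat) (alpha : R)
  (x : nat -> c00 R) :
  1 < p -> (1 < r)%N ->
  0 < alpha ->
  alpha ^+ (trunc_log 2 r) = (r%:R : R) `^ p^-1 ->
  block x ->
  (forall n, Nset alpha (x n)) ->
  (forall n, alpha ^- 2 <= lpnorm p (x n) <= alpha ^- 1) ->
  exists (y : nat -> c00 R) (F : nat -> seq nat) (c : nat -> R),
    (forall n, uniq (F n)) /\ [/\
        (forall n m i j, (n < m)%N -> i \in F n -> j \in F m -> (i < j)%N),
        (forall n k, y n k = \sum_(i <- F n) c i * x i k),
        (forall n, Nset alpha (y n)),
        block y &
        (forall n m, alpha ^- 3 <= lpnorm p (J alpha ((r%:R : R) `^ p^-1) m (y n)) <= 1)].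
Proof.
move=> p1 r1 a0 aM bx Nx hx; have p0 : 0 < p by apply: lt_trans p1.
have beta2 := ge2_powR_trunc_log p0 r1 (ltW a0) aM.
rewrite -aM; set M := trunc_log 2 r; have M0 : (0 < M)%N by rewrite trunc_log_gt0.
have a0' : 0 <= alpha by exact: ltW.
have a1 : 1 < alpha.
  by apply: gt1_powR p0 a0' _; apply: lt_le_trans beta2; rewrite ltr1n.
have x_lpsum n : ((alpha `^ p) ^+ 2)^-1 <= lpsum p (x n) <= (alpha `^ p)^-1.
  by move: (hx n); rewrite lpnorm_itv // ?invr_ge0 ?exprn_ge0 // !powR_exprnV.
have mu_bnd n i : (i < M)%N ->
    0 <= lpsum p (J alpha (alpha ^+ M) i (x n)) <= (alpha `^ p)^-1.
  move=> iM; rewrite lpsum_ge0 (le_trans (lpsum_J_le a1 (lt0r_neq0 p0) (Nx n) iM)) //.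
  by case/andP: (x_lpsum n).
have [f f_incr [th bins]] := approx_cst_subsequence (bin_width_gt0 M0 beta2) mu_bnd.
exists (fun n => comb x (block_coef p alpha M f) (slots f M (copies p alpha M) n)).
exists (slots f M (copies p alpha M)), (block_coef p alpha M f).
split; first exact: slots_uniq.
split=> //.
- exact: slots_lt.
- move=> n; apply: Nset_comb; rewrite ?lt0r_neq0 ?slots_uniq //.
  exact: block_disjoint.
- by apply: block_comb => //; [apply: slots_uniq | apply: slots_lt].
move=> n m; rewrite lpnorm_itv // ?invr_ge0 ?exprn_ge0 // powR1 powR_exprnV //.
exact: (lpsum_J_block_comb p0 a1 M0 beta2 bx Nx x_lpsum f_incr bins).
Qed.
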